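(* Fix $\alpha>1$, $R>0$, $T>1$ and $\beta,\delta,\mu>0$ with $K_{max}:=\min\big(\frac T4,\frac1{3\mu},\frac{3\beta}{2\mu}\big)>10$. For $\rho_r>0$ let $\Theta(\rho_r)=(\alpha,\rho_r,\beta\rho_r,\delta\rho_r,\mu\rho_r,T)$. Consider the set $I$ of $\rho_r>0$ satisfying $$\rho_r>\frac{\alpha}{2\delta},\qquad \rho_r>\frac{3\alpha}{4(1+\beta)^2R}g^2\Big(\frac{4R}{3K_{max}}\Big),\qquad \rho_r<\frac{\alpha}{(1+\beta)^2}\frac{g^2(R)}{R}.$$ Then on $I$, both $K'_{csi}(R,\Theta(\rho_r))$ and $M'_{csi}(R,\Theta(\rho_r))$ increase monotonically as $\rho_r$ decreases.
   Context: $g(x)=\sqrt{\frac{x}{2^x-1}}\big(2^x x\ln2-2^x+1\big)$, $x>0$. For $\Theta=(\alpha,\rho_r,\rho_d,\rho_s,\rho_0,T)$ and real $M>K\ge1$, $\frac{1}{\zeta_{csi}(M,K,R,\Theta)}=\frac1R\big[\frac{\alpha K}{M-K}(2^{R/K}-1)+M\rho_r+K\rho_d+\rho_s\big]$. $(M'_{csi}(R,\Theta),K'_{csi}(R,\Theta))$ denotes the maximizer (which exists and is unique) of $\zeta_{csi}(M,K,R,\Theta)$ over real $(M,K)$ with $1\le K\le\min\big(\frac T4,\frac{\rho_r}{3\rho_0},\frac{3\rho_d}{2\rho_0}\big)$, $M>K$. *)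

From Stdlib Require Import Reals Lra.
Open Scope R_scope.

Definition pow2 (x : R) : R := Rpower 2 x.

Definition g (x : R) : R :=
  sqrt (x / (pow2 x - 1)) * (pow2 x * x * ln 2 - pow2 x + 1).

Record Theta := mkTheta {
  th_alpha : R; th_rho_r : R; th_rho_d : R; th_rho_s : R; th_rho_0 : R; th_T : R }.

Definition inv_zeta_csi (M K Rr : R) (th : Theta) : R :=
  / Rr * (th_alpha th * K / (M - K) * (pow2 (Rr / K) - 1)
          + M * th_rho_r th + K * th_rho_d th + th_rho_s th).

Definition zeta_csi (M K Rr : R) (th : Theta) : R := / inv_zeta_csi M K Rr th.

Definition Kbound (th : Theta) : R :=
  Rmin (th_T th / 4) (Rmin (th_rho_r th / (3 * th_rho_0 th))
                           (3 * th_rho_d th / (2 * th_rho_0 th))).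

Definition csi_feasible (M K : R) (th : Theta) : Prop :=
  1 <= K <= Kbound th /\ M > K.

(* (M,K) is the maximizer (M'_csi(R,Theta), K'_csi(R,Theta)) of zeta_csi *)
Definition is_csi_maximizer (Rr : R) (th : Theta) (M K : R) : Prop :=
  csi_feasible M K th /\
  forall M0 K0, csi_feasible M0 K0 th -> zeta_csi M0 K0 Rr th <= zeta_csi M K Rr th.

Definition Theta_of (alpha beta delta mu T rho_r : R) : Theta :=
  mkTheta alpha rho_r (beta * rho_r) (delta * rho_r) (mu * rho_r) T.

Definition Kmax (T beta mu : R) : R :=
  Rmin (T / 4) (Rmin (1 / (3 * mu)) (3 * beta / (2 * mu))).

Definition in_I (alpha beta delta mu T Rr rho_r : R) : Prop :=
  rho_r > 0 /\
  rho_r > alpha / (2 * delta) /\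
  rho_r > 3 * alpha / (4 * (1 + beta) ^ 2 * Rr) * (g (4 * Rr / (3 * Kmax T beta mu))) ^ 2 /\
  rho_r < alpha / (1 + beta) ^ 2 * ((g Rr) ^ 2 / Rr).

From Pilot Require Import Defs.
From Stdlib Require Import Reals Lra.
From Coquelicot Require Import Coquelicot.
Open Scope R_scope.

(* For fixed K the cost [1/zeta] is [alpha psi(K)/(M-K) + rho M + ...] with
   [psi(K) = K (2^(R/K) - 1)]; it is minimized at [M - K = sqrt (alpha psi(K)/rho)],
   so a maximizer's K minimizes [2 sqrt (alpha psi(K)) / sqrt rho + (1 + beta) K].
   A single-crossing (revealed preference) argument shows that this argmin does
   not decrease when [1 / sqrt rho] grows.  For M: if K is unchanged, the gap
   [M - K] grows as rho drops; otherwise K2 < K1, and the one-sided first-order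
   conditions at the two argmins bound the gaps by [(1 + beta) R ln 2 q(t)] from
   above resp. below, where [t = R ln 2 / K] and
   [q(t) = (e^t - 1) / (t (t e^t - e^t + 1))] is decreasing. *)

Lemma single_crossing_le (a1 a2 b u1 u2 K1 K2 : R) :
  0 < b -> 0 <= u2 < u1 ->
  u1 * a1 + b * K1 <= u1 * a2 + b * K2 ->
  u2 * a2 + b * K2 <= u2 * a1 + b * K1 ->
  K2 <= K1.
Proof.
  intros Hb Hu H1 H2.
  assert (Ha : a1 <= a2) by nra.
  nra.
Qed.

Lemma derivable_pt_lim_nonneg_of_min_right (G : R -> R) (c l e : R) :
  derivable_pt_lim G c l -> 0 < e ->
  (forall x, c < x < c + e -> G c <= G x) -> 0 <= l.
Proof.
  intros DG He Hmin. apply Rnot_lt_le; intros Hl.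
  destruct (DG (- l / 2) ltac:(lra)) as [d Hd].
  set (h := Rmin d e / 2).
  assert (Hde : 0 < Rmin d e) by (apply Rmin_pos; [apply cond_pos | lra]).
  pose proof (Rmin_l d e); pose proof (Rmin_r d e).
  assert (Hh : 0 < h) by (unfold h; lra).
  specialize (Hd h ltac:(lra) ltac:(rewrite Rabs_right; unfold h; lra)).
  specialize (Hmin (c + h) ltac:(unfold h; lra)).
  apply Rabs_def2 in Hd.
  assert (0 <= (G (c + h) - G c) / h) by (apply Rdiv_le_0_compat; lra).
  lra.
Qed.

Lemma derivable_pt_lim_nonpos_of_min_left (G : R -> R) (c l e : R) :
  derivable_pt_lim G c l -> 0 < e ->
  (forall x, c - e < x < c -> G c <= G x) -> l <= 0.
Proof.
  intros DG He Hmin.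
  assert (DGopp : derivable_pt_lim (fun x => G (- x)) (- c) (- l)).
  { apply is_derive_Reals.
    replace (- l) with (-1 * l) by ring.
    apply (is_derive_comp G Ropp); [rewrite Ropp_involutive; now apply is_derive_Reals|].
    auto_derive; auto. }
  enough (0 <= - l) by lra.
  apply (derivable_pt_lim_nonneg_of_min_right _ _ _ e DGopp He).
  intros x Hx. rewrite Ropp_involutive. apply Hmin. lra.
Qed.

(* [slope_defect t] is [- d/dK (K (2^(R/K) - 1))] at [t = R ln 2 / K]. *)
Definition slope_defect (t : R) : R := t * exp t - exp t + 1.

Definition gap_ratio (t : R) : R := (exp t - 1) / (t * slope_defect t).

Lemma slope_defect_pos t : 0 < t -> 0 < slope_defect t.
Proof.
  intros Ht. unfold slope_defect.
  pose proof (exp_ineq1 (- t) ltac:(lra)) as Hexp. rewrite exp_Ropp in Hexp.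
  pose proof (exp_pos t).
  assert (exp t * / exp t = 1) by (field; lra).
  nra.
Qed.

Lemma gap_ratio_deriv_numer_pos t : 0 < t ->
  0 < exp t * exp t * (2 * t - 1) + exp t * (2 - 2 * t - t * t) - 1.
Proof.
  intros Ht.
  set (N := fun s => exp s * exp s * (2 * s - 1) + exp s * (2 - 2 * s - s * s) - 1).
  destruct (MVT_cor2 N (fun s => s * exp s * (4 * exp s - 4 - s)) 0 t Ht)
    as [c [Hmvt Hc]].
  { intros c _. apply is_derive_Reals. unfold N. auto_derive; auto. ring. }
  replace (N 0) with 0 in Hmvt by (unfold N; rewrite exp_0; ring).
  pose proof (exp_ineq1 c ltac:(lra)). pose proof (exp_pos c).
  assert (0 < c * exp c * (4 * exp c - 4 - c)) by (apply Rmult_lt_0_compat; nra).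
  unfold N in Hmvt. nra.
Qed.

Lemma gap_ratio_decreasing t1 t2 : 0 < t1 -> t1 < t2 -> gap_ratio t2 < gap_ratio t1.
Proof.
  intros Ht1 Ht12.
  destruct (MVT_cor2 gap_ratio
    (fun s => - (exp s * exp s * (2 * s - 1) + exp s * (2 - 2 * s - s * s) - 1)
              / (s * slope_defect s) ^ 2) t1 t2 Ht12) as [c [Hmvt Hc]].
  { intros c Hc. pose proof (slope_defect_pos c ltac:(lra)).
    apply is_derive_Reals. unfold gap_ratio, slope_defect in *. auto_derive.
    - apply Rgt_not_eq, Rmult_lt_0_compat; lra.
    - field. split; apply Rgt_not_eq; lra. }
  pose proof (slope_defect_pos c ltac:(lra)).
  pose proof (gap_ratio_deriv_numer_pos c ltac:(lra)).
  assert (0 < (c * slope_defect c) ^ 2) by (apply pow_lt, Rmult_lt_0_compat; lra).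
  assert (0 < (exp c * exp c * (2 * c - 1) + exp c * (2 - 2 * c - c * c) - 1)
              / (c * slope_defect c) ^ 2) by (apply Rdiv_lt_0_compat; lra).
  nra.
Qed.

Lemma ln2_pos : 0 < ln 2.
Proof. pose proof ln_lt_2; lra. Qed.

Lemma rate_exponent_pos Rr K : 0 < Rr -> 0 < K -> 0 < Rr / K * ln 2.
Proof.
  intros HRr HK. apply Rmult_lt_0_compat; [apply Rdiv_lt_0_compat | apply ln2_pos]; lra.
Qed.

Definition rate_cost (Rr K : R) : R := K * (Defs.pow2 (Rr / K) - 1).

Lemma rate_cost_pos Rr K : 0 < Rr -> 0 < K -> 0 < rate_cost Rr K.
Proof.
  intros HRr HK. unfold rate_cost, Defs.pow2, Rpower.
  pose proof (rate_exponent_pos Rr K HRr HK).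
  pose proof (exp_ineq1 (Rr / K * ln 2) ltac:(lra)).
  apply Rmult_lt_0_compat; lra.
Qed.

Lemma rate_cost_gap_ratio Rr K : 0 < Rr -> 0 < K ->
  rate_cost Rr K = Rr * ln 2 * slope_defect (Rr / K * ln 2) * gap_ratio (Rr / K * ln 2).
Proof.
  intros HRr HK. pose proof ln2_pos.
  pose proof (rate_exponent_pos Rr K HRr HK).
  pose proof (slope_defect_pos _ (rate_exponent_pos Rr K HRr HK)).
  unfold rate_cost, Defs.pow2, Rpower, gap_ratio. field. lra.
Qed.

Section Csi.

Variables alpha beta delta mu T Rr : R.
Hypotheses (Halpha : 0 < alpha) (Hbeta : 0 < beta) (Hdelta : 0 < delta)
  (Hmu : 0 < mu) (HRr : 0 < Rr).

Definition csi_cost (rho M K : R) : R :=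
  alpha * rate_cost Rr K / (M - K) + rho * (M + beta * K + delta).

Definition opt_gap (rho K : R) : R := sqrt (alpha * rate_cost Rr K / rho).

Definition reduced_cost (rho K : R) : R := 2 * opt_gap rho K + (1 + beta) * K.

Lemma inv_zeta_Theta_of rho M K :
  inv_zeta_csi M K Rr (Theta_of alpha beta delta mu T rho) = csi_cost rho M K / Rr.
Proof. unfold inv_zeta_csi, csi_cost, rate_cost, Theta_of; simpl. unfold Rdiv. ring. Qed.

Lemma Kbound_Theta_of rho : 0 < rho ->
  Kbound (Theta_of alpha beta delta mu T rho) = Kmax T beta mu.
Proof.
  intros Hrho. unfold Kbound, Kmax, Theta_of; simpl.
  replace (rho / (3 * (mu * rho))) with (1 / (3 * mu)) by (field; lra).
  replace (3 * (beta * rho) / (2 * (mu * rho))) with (3 * beta / (2 * mu)) by (field; lra).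
  reflexivity.
Qed.

Lemma csi_cost_pos rho M K : 0 < rho -> 0 < K -> K < M -> 0 < csi_cost rho M K.
Proof.
  intros Hrho HK HM. unfold csi_cost.
  pose proof (rate_cost_pos Rr K HRr HK).
  assert (0 < alpha * rate_cost Rr K / (M - K))
    by (apply Rdiv_lt_0_compat; [apply Rmult_lt_0_compat|]; lra).
  assert (0 < rho * (M + beta * K + delta)) by (apply Rmult_lt_0_compat; nra).
  lra.
Qed.

Lemma opt_gap_pos rho K : 0 < rho -> 0 < K -> 0 < opt_gap rho K.
Proof.
  intros Hrho HK. apply sqrt_lt_R0, Rdiv_lt_0_compat; [|lra].
  apply Rmult_lt_0_compat; [lra|]. now apply rate_cost_pos.
Qed.

Lemma opt_gap_sq rho K : 0 < rho -> 0 < K ->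
  rho * opt_gap rho K ^ 2 = alpha * rate_cost Rr K.
Proof.
  intros Hrho HK. unfold opt_gap. rewrite <- Rsqr_pow2, Rsqr_sqrt.
  - field. lra.
  - pose proof (rate_cost_pos Rr K HRr HK).
    apply Rlt_le, Rdiv_lt_0_compat; [apply Rmult_lt_0_compat|]; lra.
Qed.

(* AM-GM: the excess of [a / m + rho m] over its minimum at [m = sqrt (a / rho)]. *)
Lemma csi_cost_excess rho M K : 0 < rho -> 0 < K -> K < M ->
  csi_cost rho M K = csi_cost rho (K + opt_gap rho K) K
                     + rho * (M - K - opt_gap rho K) ^ 2 / (M - K).
Proof.
  intros Hrho HK HM. pose proof (opt_gap_pos rho K Hrho HK).
  unfold csi_cost. rewrite <- (opt_gap_sq rho K Hrho HK).
  field. lra.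
Qed.

Lemma csi_cost_opt_gap rho K : 0 < rho -> 0 < K ->
  csi_cost rho (K + opt_gap rho K) K = rho * reduced_cost rho K + delta * rho.
Proof.
  intros Hrho HK. pose proof (opt_gap_pos rho K Hrho HK).
  unfold csi_cost, reduced_cost. rewrite <- (opt_gap_sq rho K Hrho HK).
  field. lra.
Qed.

Lemma csi_maximizer_min_cost rho M K : 0 < rho ->
  is_csi_maximizer Rr (Theta_of alpha beta delta mu T rho) M K ->
  1 <= K <= Kmax T beta mu /\ K < M /\
  forall M0 K0, 1 <= K0 <= Kmax T beta mu -> K0 < M0 ->
    csi_cost rho M K <= csi_cost rho M0 K0.
Proof.
  intros Hrho [[HK HM] Hmax]. unfold csi_feasible in *.
  rewrite Kbound_Theta_of in HK, Hmax by lra.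
  repeat split; try lra.
  intros M0 K0 HK0 HM0.
  specialize (Hmax M0 K0 (conj HK0 HM0)). unfold zeta_csi in Hmax.
  rewrite !inv_zeta_Theta_of in Hmax.
  pose proof (csi_cost_pos rho M K Hrho ltac:(lra) HM).
  pose proof (csi_cost_pos rho M0 K0 Hrho ltac:(lra) HM0).
  apply Rinv_le_contravar in Hmax; [|apply Rinv_0_lt_compat, Rdiv_lt_0_compat; lra].
  rewrite !Rinv_inv in Hmax.
  apply Rmult_le_reg_r with (/ Rr); [apply Rinv_0_lt_compat; lra | exact Hmax].
Qed.

Lemma csi_maximizer_char rho M K : 0 < rho ->
  is_csi_maximizer Rr (Theta_of alpha beta delta mu T rho) M K ->
  1 <= K <= Kmax T beta mu /\ M - K = opt_gap rho K /\
  forall K', 1 <= K' <= Kmax T beta mu -> reduced_cost rho K <= reduced_cost rho K'.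
Proof.
  intros Hrho Hopt.
  destruct (csi_maximizer_min_cost rho M K Hrho Hopt) as (HK & HM & Hmin).
  assert (Hgap : M - K = opt_gap rho K).
  { pose proof (opt_gap_pos rho K Hrho ltac:(lra)).
    pose proof (Hmin (K + opt_gap rho K) K HK ltac:(lra)) as Hle.
    rewrite (csi_cost_excess rho M K Hrho ltac:(lra) HM) in Hle.
    assert (Hexcess : rho / (M - K) * (M - K - opt_gap rho K) ^ 2 <= rho / (M - K) * 0)
      by (unfold Rdiv in *; lra).
    apply Rmult_le_reg_l in Hexcess; [nra | apply Rdiv_lt_0_compat; lra]. }
  repeat split; try lra.
  intros K' HK'.
  pose proof (opt_gap_pos rho K' Hrho ltac:(lra)).
  pose proof (Hmin (K' + opt_gap rho K') K' HK' ltac:(lra)) as Hle.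
  replace M with (K + opt_gap rho K) in Hle by lra.
  rewrite !csi_cost_opt_gap in Hle by lra.
  apply Rmult_le_reg_l with rho; lra.
Qed.

Lemma reduced_cost_deriv rho K : 0 < rho -> 0 < K ->
  derivable_pt_lim (reduced_cost rho) K
    ((1 + beta) - alpha * slope_defect (Rr / K * ln 2) / (rho * opt_gap rho K)).
Proof.
  intros Hrho HK. pose proof (opt_gap_pos rho K Hrho HK).
  pose proof (rate_cost_pos Rr K HRr HK).
  assert (0 < alpha * rate_cost Rr K / rho)
    by (apply Rdiv_lt_0_compat; [apply Rmult_lt_0_compat|]; lra).
  apply is_derive_Reals. unfold reduced_cost, opt_gap, rate_cost, Defs.pow2, Rpower in *.
  auto_derive.
  - repeat split; lra.
  - unfold slope_defect, Rdiv, Rminus in *.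
    set (E := exp (Rr * / K * ln 2)) in *.
    set (S := sqrt (alpha * (K * (E + - 1)) * / rho)) in *.
    field. repeat split; lra.
Qed.

Lemma gap_ratio_bound_sub_opt_gap rho K : 0 < rho -> 0 < K ->
  ((1 + beta) * (Rr * ln 2) * gap_ratio (Rr / K * ln 2) - opt_gap rho K)
  * (alpha * slope_defect (Rr / K * ln 2)) =
  rho * opt_gap rho K ^ 2
  * ((1 + beta) - alpha * slope_defect (Rr / K * ln 2) / (rho * opt_gap rho K)).
Proof.
  intros Hrho HK.
  pose proof (opt_gap_pos rho K Hrho HK).
  pose proof (slope_defect_pos _ (rate_exponent_pos Rr K HRr HK)).
  pose proof ln2_pos.
  assert (Hsq := opt_gap_sq rho K Hrho HK).
  rewrite rate_cost_gap_ratio in Hsq by lra.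
  set (t := Rr / K * ln 2) in *. set (m := opt_gap rho K) in *.
  replace (gap_ratio t) with (rho * m ^ 2 / (alpha * (Rr * ln 2) * slope_defect t)).
  - field. repeat split; nra.
  - rewrite Hsq. field. repeat split; nra.
Qed.

Lemma opt_gap_sq_slope_pos rho K : 0 < rho -> 0 < K ->
  0 < rho * opt_gap rho K ^ 2 /\ 0 < alpha * slope_defect (Rr / K * ln 2).
Proof.
  intros Hrho HK. pose proof (opt_gap_pos rho K Hrho HK).
  pose proof (slope_defect_pos _ (rate_exponent_pos Rr K HRr HK)).
  split; apply Rmult_lt_0_compat; try apply pow_lt; lra.
Qed.

Lemma opt_gap_ge_of_min_left rho K e : 0 < rho -> 0 < K -> 0 < e ->
  (forall x, K - e < x < K -> reduced_cost rho K <= reduced_cost rho x) ->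
  (1 + beta) * (Rr * ln 2) * gap_ratio (Rr / K * ln 2) <= opt_gap rho K.
Proof.
  intros Hrho HK He Hmin.
  pose proof (derivable_pt_lim_nonpos_of_min_left _ _ _ _
    (reduced_cost_deriv rho K Hrho HK) He Hmin).
  pose proof (gap_ratio_bound_sub_opt_gap rho K Hrho HK).
  pose proof (opt_gap_sq_slope_pos rho K Hrho HK).
  nra.
Qed.

Lemma opt_gap_le_of_min_right rho K e : 0 < rho -> 0 < K -> 0 < e ->
  (forall x, K < x < K + e -> reduced_cost rho K <= reduced_cost rho x) ->
  opt_gap rho K <= (1 + beta) * (Rr * ln 2) * gap_ratio (Rr / K * ln 2).
Proof.
  intros Hrho HK He Hmin.
  pose proof (derivable_pt_lim_nonneg_of_min_right _ _ _ _
    (reduced_cost_deriv rho K Hrho HK) He Hmin).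
  pose proof (gap_ratio_bound_sub_opt_gap rho K Hrho HK).
  pose proof (opt_gap_sq_slope_pos rho K Hrho HK).
  nra.
Qed.

Lemma reduced_cost_scaled rho K : 0 < rho ->
  reduced_cost rho K = 2 / sqrt rho * sqrt (alpha * rate_cost Rr K) + (1 + beta) * K.
Proof.
  intros Hrho. unfold reduced_cost, opt_gap. rewrite sqrt_div_alt by lra.
  unfold Rdiv. ring.
Qed.

Lemma reduced_cost_argmin_antitone rho1 rho2 K1 K2 : 0 < rho1 < rho2 ->
  reduced_cost rho1 K1 <= reduced_cost rho1 K2 ->
  reduced_cost rho2 K2 <= reduced_cost rho2 K1 ->
  K2 <= K1.
Proof.
  intros Hrho. rewrite !reduced_cost_scaled by lra.
  apply single_crossing_le; [lra|].
  pose proof (sqrt_lt_R0 rho1 ltac:(lra)).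
  pose proof (sqrt_lt_1_alt rho1 rho2 ltac:(lra)).
  split.
  - apply Rlt_le, Rdiv_lt_0_compat; lra.
  - apply Rmult_lt_compat_l; [lra|]. apply Rinv_lt_contravar; nra.
Qed.

Lemma opt_gap_antitone rho1 rho2 K : 0 < rho1 < rho2 -> 0 < K ->
  opt_gap rho2 K < opt_gap rho1 K.
Proof.
  intros Hrho HK. pose proof (rate_cost_pos Rr K HRr HK).
  apply sqrt_lt_1_alt. split.
  - apply Rlt_le, Rdiv_lt_0_compat; [apply Rmult_lt_0_compat|]; lra.
  - apply Rmult_lt_compat_l; [apply Rmult_lt_0_compat; lra|].
    apply Rinv_lt_contravar; nra.
Qed.

Lemma opt_gap_lt_of_argmin rho1 rho2 K1 K2 Kb : 0 < rho1 -> 0 < rho2 ->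
  1 <= K2 < K1 -> K1 <= Kb ->
  (forall K, 1 <= K <= Kb -> reduced_cost rho1 K1 <= reduced_cost rho1 K) ->
  (forall K, 1 <= K <= Kb -> reduced_cost rho2 K2 <= reduced_cost rho2 K) ->
  opt_gap rho2 K2 < opt_gap rho1 K1.
Proof.
  intros Hrho1 Hrho2 HK HKb Hmin1 Hmin2.
  pose proof (opt_gap_ge_of_min_left rho1 K1 (K1 - 1) Hrho1 ltac:(lra) ltac:(lra)
    ltac:(intros x Hx; apply Hmin1; lra)).
  pose proof (opt_gap_le_of_min_right rho2 K2 (Kb - K2) Hrho2 ltac:(lra) ltac:(lra)
    ltac:(intros x Hx; apply Hmin2; lra)).
  assert (Ht : Rr / K1 * ln 2 < Rr / K2 * ln 2).
  { pose proof ln2_pos. apply Rmult_lt_compat_r; [lra|].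
    apply Rmult_lt_compat_l; [lra|]. apply Rinv_lt_contravar; nra. }
  pose proof (gap_ratio_decreasing _ _ (rate_exponent_pos Rr K1 HRr ltac:(lra)) Ht).
  assert (0 < (1 + beta) * (Rr * ln 2))
    by (pose proof ln2_pos; apply Rmult_lt_0_compat; [|apply Rmult_lt_0_compat]; lra).
  nra.
Qed.

End Csi.

Theorem theorem6 (alpha Rr T beta delta mu : R) :
  alpha > 1 -> Rr > 0 -> T > 1 -> beta > 0 -> delta > 0 -> mu > 0 ->
  Kmax T beta mu > 10 ->
  forall rho1 rho2 M1 K1 M2 K2 : R,
    in_I alpha beta delta mu T Rr rho1 ->
    in_I alpha beta delta mu T Rr rho2 ->
    rho1 < rho2 ->
    is_csi_maximizer Rr (Theta_of alpha beta delta mu T rho1) M1 K1 ->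
    is_csi_maximizer Rr (Theta_of alpha beta delta mu T rho2) M2 K2 ->
    K2 <= K1 /\ M2 <= M1.
Proof.
  intros Halpha HRr _ Hbeta Hdelta Hmu _ rho1 rho2 M1 K1 M2 K2 [Hrho1 _] [Hrho2 _]
    Hrho Hopt1 Hopt2.
  destruct (csi_maximizer_char alpha beta delta mu T Rr ltac:(lra) ltac:(lra) ltac:(lra)
    Hmu HRr rho1 M1 K1 Hrho1 Hopt1) as (HK1 & Hgap1 & Hmin1).
  destruct (csi_maximizer_char alpha beta delta mu T Rr ltac:(lra) ltac:(lra) ltac:(lra)
    Hmu HRr rho2 M2 K2 Hrho2 Hopt2) as (HK2 & Hgap2 & Hmin2).
  pose proof (reduced_cost_argmin_antitone alpha beta Rr ltac:(lra) rho1 rho2 K1 K2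
    ltac:(lra) (Hmin1 K2 HK2) (Hmin2 K1 HK1)) as HK.
  split; [exact HK|].
  destruct (Req_dec K1 K2) as [<- | HneK].
  - pose proof (opt_gap_antitone alpha Rr ltac:(lra) HRr rho1 rho2 K1 ltac:(lra) ltac:(lra)).
    lra.
  - pose proof (opt_gap_lt_of_argmin alpha beta Rr ltac:(lra) ltac:(lra) HRr
      rho1 rho2 K1 K2 (Kmax T beta mu) Hrho1 Hrho2 ltac:(lra) ltac:(lra) Hmin1 Hmin2).
    lra.
Qed.
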